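(* Let $(b(n))_{n\in\mathbb{N}}$ be a bounded sequence of complex numbers such that for every $\alpha\in[0,1]$, $$\lim_{M\to\infty}\limsup_{N\to\infty}\frac1N\sum_{n=1}^N\Big|\frac1M\sum_{m=1}^M e(m\alpha)\, b(Mn+m)\Big|=0.$$ Then $$\lim_{N\to\infty}\sup_{\alpha\in[0,1]}\Big|\frac1N\sum_{n=1}^N e(n\alpha)\, b(n)\Big|=0.$$
   Context: $e(t)=e^{2\pi i t}$ for $t\in\mathbb{R}$. *)

From Stdlib Require Import Reals.
From Coquelicot Require Import Coquelicot.
Open Scope R_scope.

Definition e (t : R) : C := (cos (2 * PI * t), sin (2 * PI * t)).

Definition inner_avg (b : nat -> C) (alpha : R) (M n : nat) : C :=
  scal (/ INR M) (sum_n_m (fun m => Cmult (e (INR m * alpha)) (b (M * n + m)%nat)) 1 M).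

Definition outer_avg (b : nat -> C) (alpha : R) (M N : nat) : R :=
  / INR N * sum_n_m (fun n => Cmod (inner_avg b alpha M n)) 1 N.

Definition exp_avg (b : nat -> C) (alpha : R) (N : nat) : C :=
  scal (/ INR N) (sum_n_m (fun n => Cmult (e (INR n * alpha)) (b n)) 1 N).

From Stdlib Require Import Reals Lra Lia Classical ClassicalEpsilon.
From Coquelicot Require Import Coquelicot.
Open Scope R_scope.

(* Fix a frequency t. Cut [1, N] into blocks of length M: the phase e(M n alpha) factors
   out of the n-th block, whose sum therefore has modulus M |inner_avg alpha M n|, and
   replacing alpha by t inside a block costs at most 4 pi M K |alpha - t| per term, K a
   bound for b. Hence
     |exp_avg alpha N| <= outer_avg t M (N / M) + 4 pi M K |alpha - t| + 2 M K / N,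
   and choosing M by the hypothesis at t makes the right side small for all alpha near t
   and all large N. A Lebesgue number of the resulting cover of [0, 1] makes this uniform
   in alpha. *)

Lemma scal_C (r : R) (c : C) : scal r c = Cmult (RtoC r) c.
Proof.
  destruct c as [x y].
  apply injective_projections; simpl; unfold scal, mult; simpl; unfold mult; simpl; ring.
Qed.

Lemma Cmod_scal (r : R) (c : C) : Cmod (scal r c) = Rabs r * Cmod c.
Proof. rewrite scal_C, Cmod_mult, Cmod_R. reflexivity. Qed.

Lemma Cmod_sum_n_m_le (a : nat -> C) (n m : nat) :
  Cmod (sum_n_m a n m) <= sum_n_m (fun k => Cmod (a k)) n m.
Proof. exact (norm_sum_n_m (V := C_NormedModule) a n m). Qed.

Lemma sum_n_m_le_loc (a b : nat -> R) (n m : nat) :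
  (forall k, (n <= k <= m)%nat -> a k <= b k) -> sum_n_m a n m <= sum_n_m b n m.
Proof.
  intros Hab. rewrite (sum_n_m_ext_loc a (fun k => Rmin (a k) (b k))).
  - apply sum_n_m_le. intros k. apply Rmin_r.
  - intros k Hk. rewrite Rmin_left; auto.
Qed.

Lemma sum_n_m_le_const (a : nat -> R) (c : R) (n m : nat) :
  (forall k, (n <= k <= m)%nat -> a k <= c) -> sum_n_m a n m <= INR (S m - n) * c.
Proof. intros Ha. rewrite <- sum_n_m_const. exact (sum_n_m_le_loc _ _ _ _ Ha). Qed.

Lemma sum_n_m_shift {G : AbelianMonoid} (g : nat -> G) (p n m : nat) :
  sum_n_m g (p + n) (p + m) = sum_n_m (fun k => g (p + k)%nat) n m.
Proof.
  revert g; induction p as [|p IHp]; intros g; [reflexivity|].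
  simpl. rewrite <- sum_n_m_S. exact (IHp (fun k => g (S k))).
Qed.

Lemma sum_n_m_blocks {G : AbelianMonoid} (g : nat -> G) (M Q : nat) :
  sum_n_m g 1 (M * S Q) = sum_n_m (fun q => sum_n_m (fun m => g (M * q + m)%nat) 1 M) 0 Q.
Proof.
  induction Q as [|Q IHQ].
  - rewrite sum_n_n, Nat.mul_1_r, Nat.mul_0_r. reflexivity.
  - rewrite (sum_n_m_Chasles g 1 (M * S Q)) by nia.
    rewrite IHQ, sum_n_Sm by lia. f_equal.
    replace (S (M * S Q)) with (M * S Q + 1)%nat by lia.
    replace (M * S (S Q))%nat with (M * S Q + M)%nat by lia.
    apply sum_n_m_shift.
Qed.

Lemma Cmod_le_Rabs_add (c : C) : Cmod c <= Rabs (fst c) + Rabs (snd c).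
Proof.
  destruct c as [x y]; simpl.
  replace (x, y) with (Cplus (RtoC x) (Cmult Ci (RtoC y))) at 1 by
    (apply injective_projections; simpl; ring).
  eapply Rle_trans; [apply Cmod_triangle|].
  rewrite Cmod_mult, !Cmod_R, Cmod_Ci. lra.
Qed.

Lemma Cmod_le_Cmod_plus (x y : C) : Cmod x <= Cmod (Cplus x y) + Cmod y.
Proof.
  rewrite <- (Cmod_opp y). replace x with (Cplus (Cplus x y) (Copp y)) at 1 by ring.
  apply Cmod_triangle.
Qed.

Lemma eventually_div_INR_lt (c eps : R) : 0 < eps -> eventually (fun N => c / INR N < eps).
Proof.
  intros Heps.
  destruct (nfloor_ex (Rabs c / eps)) as [N0 [_ HN0]];
    [apply Rdiv_le_0_compat; [apply Rabs_pos | exact Heps]|].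
  exists (S N0). intros N HN.
  assert (HN0N : INR N0 + 1 <= INR N) by (rewrite <- S_INR; apply le_INR, HN).
  assert (Habs : Rabs c < INR N * eps) by (apply Rlt_div_l; lra).
  pose proof (pos_INR N0). pose proof (Rle_abs c).
  apply Rlt_div_l; lra.
Qed.

Lemma LimSup_seq_eventually_lt (u : nat -> R) (K eps : R) :
  (forall n, u n <= K) -> real (LimSup_seq u) < eps -> eventually (fun n => u n < eps).
Proof.
  intros HK Hlt.
  assert (HL : is_LimSup_seq u (LimSup_seq u))
    by (unfold LimSup_seq; destruct ex_LimSup_seq; assumption).
  destruct (LimSup_seq u) as [l| |]; simpl in Hlt.
  - assert (Hpos : 0 < eps - l) by lra.
    destruct (HL (mkposreal _ Hpos)) as [_ [N HN]]. exists N. intros n Hn.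
    specialize (HN n Hn). simpl in HN. lra.
  - destruct (HL K 0%nat) as [n [_ Hn]]. specialize (HK n). lra.
  - exact (HL eps).
Qed.

Lemma Lub_Rbar_between (E : R -> Prop) (lo hi y0 : R) :
  E y0 -> (forall y, E y -> lo <= y <= hi) -> lo <= real (Lub_Rbar E) <= hi.
Proof.
  intros Hy0 HE. destruct (Lub_Rbar_correct E) as [Hub Hleast].
  assert (Hhi : Rbar_le (Lub_Rbar E) hi) by (apply Hleast; intros y Hy; apply HE, Hy).
  pose proof (Hub y0 Hy0) as Hy0le. pose proof (HE y0 Hy0).
  destruct (Lub_Rbar E); simpl in *; try contradiction. lra.
Qed.

Lemma eventually_uniform_on_interval (a b : R) (P : R -> nat -> Prop) :
  (forall t, a <= t <= b -> exists delta : posreal,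
     eventually (fun N => forall x, Rabs (x - t) < delta -> P x N)) ->
  eventually (fun N => forall x, a <= x <= b -> P x N).
Proof.
  intros Hloc.
  assert (Hchoice : forall t, exists p : posreal * nat, a <= t <= b ->
            forall N, (snd p <= N)%nat -> forall x, Rabs (x - t) < fst p -> P x N).
  { intros t. destruct (classic (a <= t <= b)) as [Ht|Ht].
    - destruct (Hloc t Ht) as [delta [N0 HN0]]. exists (delta, N0). intros _. exact HN0.
    - exists (mkposreal 1 Rlt_0_1, 0%nat). intros Ht'. contradiction. }
  destruct (choice _ Hchoice) as [g Hg].
  (* Shrinking the radius at [t] to [1 / (N_t + 1)] lets the Lebesgue number [d] bound
     every threshold: [N_t < 1 / d]. *)
  assert (Hpos : forall t, 0 < Rmin (fst (g t)) (/ (INR (snd (g t)) + 1))).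
  { intros t. apply Rmin_pos; [apply cond_pos | apply RinvN_pos]. }
  destruct (compactness_value_1d a b (fun t => mkposreal _ (Hpos t))) as [d Hd].
  destruct (nfloor_ex (/ d)) as [N0 [_ HN0]]; [apply Rlt_le, Rinv_0_lt_compat, cond_pos|].
  exists N0. intros N HN x Hx.
  apply NNPP. intros HnotP. apply (Hd x Hx). intros [t [Ht [Hxt Hdt]]]. apply HnotP.
  simpl in Hxt, Hdt.
  apply (Hg t Ht); [|exact (Rlt_le_trans _ _ _ Hxt (Rmin_l _ _))].
  assert (HNt : INR (snd (g t)) + 1 <= / d).
  { rewrite <- (Rinv_inv (INR (snd (g t)) + 1)). apply Rinv_le_contravar; [apply cond_pos|].
    exact (Rle_trans _ _ _ Hdt (Rmin_r _ _)). }
  apply Nat.lt_le_incl, (Nat.lt_le_trans _ N0 _); [apply INR_lt; lra | exact HN].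
Qed.

Lemma Cmod_e (t : R) : Cmod (e t) = 1.
Proof.
  unfold e, Cmod; simpl.
  pose proof (sin2_cos2 (2 * PI * t)) as H. unfold Rsqr in H.
  replace (_ + _) with 1 by nra. apply sqrt_1.
Qed.

Lemma e_plus (x y : R) : e (x + y) = Cmult (e x) (e y).
Proof.
  unfold e, Cmult; simpl. rewrite Rmult_plus_distr_l, cos_plus, sin_plus.
  f_equal; ring.
Qed.

Lemma sin_lipschitz (x y : R) : Rabs (sin x - sin y) <= Rabs (x - y).
Proof.
  destruct (MVT_abs sin cos y x) as [c [-> _]]; [intros; apply derivable_pt_lim_sin|].
  rewrite <- (Rmult_1_l (Rabs (x - y))) at 2.
  apply Rmult_le_compat_r; [apply Rabs_pos|]. apply Rabs_le, COS_bound.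
Qed.

Lemma cos_lipschitz (x y : R) : Rabs (cos x - cos y) <= Rabs (x - y).
Proof.
  destruct (MVT_abs cos (fun z => - sin z) y x) as [c [-> _]];
    [intros; apply derivable_pt_lim_cos|].
  rewrite <- (Rmult_1_l (Rabs (x - y))) at 2.
  apply Rmult_le_compat_r; [apply Rabs_pos|].
  rewrite Rabs_Ropp. apply Rabs_le, SIN_bound.
Qed.

Lemma e_lipschitz (x y : R) : Cmod (Cminus (e x) (e y)) <= 4 * PI * Rabs (x - y).
Proof.
  eapply Rle_trans; [apply Cmod_le_Rabs_add|]. simpl.
  pose proof (cos_lipschitz (2 * PI * x) (2 * PI * y)).
  pose proof (sin_lipschitz (2 * PI * x) (2 * PI * y)).
  replace (2 * PI * x - 2 * PI * y) with (2 * PI * (x - y)) in * by ring.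
  rewrite Rabs_mult, (Rabs_right (2 * PI)) in * by (pose proof PI_RGT_0; lra).
  unfold Rminus in *. lra.
Qed.

Lemma Cmod_scal_inv_INR (M : nat) (c : C) : Cmod (scal (/ INR M) c) = / INR M * Cmod c.
Proof. rewrite Cmod_scal, Rabs_inv, (Rabs_pos_eq (INR M)) by apply pos_INR. reflexivity. Qed.

Definition exp_term (b : nat -> C) (alpha : R) (n : nat) : C :=
  Cmult (e (INR n * alpha)) (b n).

Lemma Cmod_block_sum (b : nat -> C) (alpha : R) (M q : nat) : (1 <= M)%nat ->
  Cmod (sum_n_m (fun m => exp_term b alpha (M * q + m)) 1 M)
  = INR M * Cmod (inner_avg b alpha M q).
Proof.
  intros HM. unfold inner_avg. rewrite Cmod_scal_inv_INR, <- Rmult_assoc, Rinv_r, Rmult_1_l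
    by (apply not_0_INR; lia).
  rewrite (sum_n_m_ext _ (fun m => mult (e (INR (M * q) * alpha))
                                        (Cmult (e (INR m * alpha)) (b (M * q + m)%nat)))).
  - rewrite sum_n_m_mult_l. change mult with Cmult. rewrite Cmod_mult, Cmod_e. apply Rmult_1_l.
  - intros m. unfold exp_term. rewrite plus_INR, Rmult_plus_distr_r, e_plus.
    symmetry. apply Cmult_assoc.
Qed.

Lemma outer_avg_nonneg (b : nat -> C) (alpha : R) (M N : nat) : 0 <= outer_avg b alpha M N.
Proof.
  apply Rmult_le_pos.
  - destruct N as [|N]; [simpl; rewrite Rinv_0; lra|].
    apply Rlt_le, Rinv_0_lt_compat, lt_0_INR; lia.
  - apply Rle_trans with (sum_n_m (fun _ => 0) 1 N).
    + rewrite sum_n_m_const. lra.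
    + apply sum_n_m_le. intros n. apply Cmod_ge_0.
Qed.

Lemma INR_mul_outer_avg (b : nat -> C) (alpha : R) (M N : nat) :
  INR N * outer_avg b alpha M N = sum_n_m (fun n => Cmod (inner_avg b alpha M n)) 1 N.
Proof.
  unfold outer_avg. destruct N as [|N].
  - rewrite sum_n_m_zero by lia. apply Rmult_0_l.
  - rewrite <- Rmult_assoc, Rinv_r, Rmult_1_l by (apply not_0_INR; lia). reflexivity.
Qed.

Section BoundedSequence.

Variables (b : nat -> C) (K : R).
Hypothesis b_bounded : forall n, Cmod (b n) <= K.

Lemma bound_nonneg : 0 <= K.
Proof. exact (Rle_trans _ _ _ (Cmod_ge_0 _) (b_bounded 0)). Qed.

Lemma Cmod_exp_term_le (alpha : R) (n : nat) : Cmod (exp_term b alpha n) <= K.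
Proof. unfold exp_term. rewrite Cmod_mult, Cmod_e, Rmult_1_l. apply b_bounded. Qed.

Lemma Cmod_sum_exp_term_le (alpha : R) (n m : nat) :
  Cmod (sum_n_m (exp_term b alpha) n m) <= INR (S m - n) * K.
Proof.
  eapply Rle_trans; [apply Cmod_sum_n_m_le|].
  apply sum_n_m_le_const. intros k _. apply Cmod_exp_term_le.
Qed.

Lemma Cmod_inner_avg_le (alpha : R) (M q : nat) : (1 <= M)%nat ->
  Cmod (inner_avg b alpha M q) <= K.
Proof.
  intros HM. apply (Rmult_le_reg_l (INR M)); [apply lt_0_INR; lia|].
  rewrite <- Cmod_block_sum by exact HM.
  eapply Rle_trans; [apply Cmod_sum_n_m_le|].
  replace (INR M) with (INR (S M - 1)) by (f_equal; lia).
  apply sum_n_m_le_const. intros k _. apply Cmod_exp_term_le.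
Qed.

Lemma Cmod_inner_avg_lipschitz (alpha t : R) (M q : nat) : (1 <= M)%nat ->
  Cmod (inner_avg b alpha M q)
  <= Cmod (inner_avg b t M q) + 4 * PI * INR M * K * Rabs (alpha - t).
Proof.
  intros HM.
  set (D := fun m => Cmult (Cminus (e (INR m * alpha)) (e (INR m * t))) (b (M * q + m)%nat)).
  assert (Hsum : sum_n_m (fun m => Cmult (e (INR m * alpha)) (b (M * q + m)%nat)) 1 M
                 = Cplus (sum_n_m (fun m => Cmult (e (INR m * t)) (b (M * q + m)%nat)) 1 M)
                         (sum_n_m D 1 M)).
  { rewrite <- (sum_n_m_plus (G := C_AbelianMonoid)).
    apply sum_n_m_ext. intros m. unfold D.
    generalize (e (INR m * alpha)) (e (INR m * t)) (b (M * q + m)%nat). intros x y z.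
    change (x * z = y * z + (x - y) * z)%C. ring. }
  assert (HD : forall m, (1 <= m <= M)%nat -> Cmod (D m) <= 4 * PI * INR M * K * Rabs (alpha - t)).
  { intros m Hm. unfold D. rewrite Cmod_mult.
    replace (4 * PI * INR M * K * Rabs (alpha - t))
      with (4 * PI * (INR M * Rabs (alpha - t)) * K) by ring.
    apply Rmult_le_compat; try apply Cmod_ge_0; [|apply b_bounded].
    eapply Rle_trans; [apply e_lipschitz|].
    pose proof PI_RGT_0.
    apply Rmult_le_compat_l; [lra|].
    rewrite <- Rmult_minus_distr_l, Rabs_mult, Rabs_pos_eq by apply pos_INR.
    apply Rmult_le_compat_r; [apply Rabs_pos|]. apply le_INR; lia. }
  unfold inner_avg at 1. rewrite Hsum, scal_C, Cmult_plus_distr_l, <- !scal_C.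
  eapply Rle_trans; [apply Cmod_triangle|].
  apply Rplus_le_compat_l. rewrite Cmod_scal_inv_INR.
  apply (Rmult_le_reg_l (INR M)); [apply lt_0_INR; lia|].
  rewrite <- Rmult_assoc, Rinv_r, Rmult_1_l by (apply not_0_INR; lia).
  eapply Rle_trans; [apply Cmod_sum_n_m_le|].
  replace (INR M) with (INR (S M - 1)) at 1 by (f_equal; lia).
  apply sum_n_m_le_const. exact HD.
Qed.

Lemma Cmod_sum_blocks_le (alpha t : R) (M Q : nat) : (1 <= M)%nat ->
  Cmod (sum_n_m (exp_term b alpha) 1 (M * S Q))
  <= INR M * K + INR M * INR Q * (outer_avg b t M Q + 4 * PI * INR M * K * Rabs (alpha - t)).
Proof.
  intros HM. set (c := 4 * PI * INR M * K * Rabs (alpha - t)).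
  rewrite sum_n_m_blocks. eapply Rle_trans; [apply Cmod_sum_n_m_le|].
  rewrite (sum_n_m_ext _ (fun q => INR M * Cmod (inner_avg b alpha M q)))
    by (intros q; apply Cmod_block_sum, HM).
  (* [outer_avg] starts at the block [n = 1]; the block [n = 0] is bounded trivially. *)
  rewrite sum_Sn_m by lia. apply Rplus_le_compat.
  - apply Rmult_le_compat_l; [apply pos_INR|]. apply Cmod_inner_avg_le, HM.
  - eapply Rle_trans.
    { apply (sum_n_m_le _ (fun q => plus (mult (INR M) (Cmod (inner_avg b t M q))) (INR M * c))).
      intros q. change plus with Rplus; change mult with Rmult.
      rewrite <- Rmult_plus_distr_l. apply Rmult_le_compat_l; [apply pos_INR|].
      apply Cmod_inner_avg_lipschitz, HM. }
    rewrite sum_n_m_plus, (sum_n_m_mult_l (K := R_Ring)), sum_n_m_const, <- INR_mul_outer_avg.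
    replace (S Q - 1)%nat with Q by lia.
    change plus with Rplus; change mult with Rmult. lra.
Qed.

Lemma Cmod_exp_avg_le (alpha t : R) (M N : nat) : (1 <= M)%nat -> (M <= N)%nat ->
  Cmod (exp_avg b alpha N)
  <= outer_avg b t M (N / M) + 4 * PI * INR M * K * Rabs (alpha - t) + 2 * INR M * K / INR N.
Proof.
  intros HM HMN.
  set (Q := (N / M)%nat). set (c := 4 * PI * INR M * K * Rabs (alpha - t)).
  assert (HMQ : (M * Q <= N)%nat) by apply Nat.Div0.mul_div_le.
  (* [1, N] is [Q + 1] blocks of length [M] minus at most [M] trailing terms. *)
  assert (HNP : (N <= M * S Q)%nat).
  { pose proof (Nat.div_mod N M ltac:(lia)). pose proof (Nat.mod_upper_bound N M ltac:(lia)).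
    lia. }
  assert (HNpos : 0 < INR N) by (apply lt_0_INR; lia).
  assert (Hc : 0 <= c).
  { pose proof PI_RGT_0. pose proof (pos_INR M). pose proof bound_nonneg.
    pose proof (Rabs_pos (alpha - t)). unfold c.
    apply Rmult_le_pos; [|lra]. apply Rmult_le_pos; [|lra]. apply Rmult_le_pos; lra. }
  assert (Hsum : Cmod (sum_n_m (exp_term b alpha) 1 N)
                 <= INR M * K + INR M * INR Q * (outer_avg b t M Q + c) + INR M * K).
  { pose proof (Cmod_sum_blocks_le alpha t M Q HM) as Hblocks. fold c in Hblocks.
    rewrite (sum_n_m_Chasles _ 1 N (M * S Q)) in Hblocks by lia.
    eapply Rle_trans; [apply Cmod_le_Cmod_plus|]. apply Rplus_le_compat; [exact Hblocks|].
    eapply Rle_trans; [apply Cmod_sum_exp_term_le|].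
    apply Rmult_le_compat_r; [apply bound_nonneg|]. apply le_INR. lia. }
  assert (HQN : INR M * INR Q <= INR N) by (rewrite <- mult_INR; apply le_INR, HMQ).
  pose proof (outer_avg_nonneg b t M Q).
  unfold exp_avg. rewrite Cmod_scal_inv_INR.
  apply (Rmult_le_reg_l (INR N)); [exact HNpos|].
  rewrite <- Rmult_assoc, Rinv_r, Rmult_1_l by lra.
  unfold Rdiv. rewrite !Rmult_plus_distr_l.
  replace (INR N * (2 * INR M * K * / INR N)) with (2 * INR M * K) by (field; lra).
  change (sum_n_m (fun n => Cmult (e (INR n * alpha)) (b n)) 1 N)
    with (sum_n_m (exp_term b alpha) 1 N).
  nra.
Qed.

Lemma outer_avg_le (alpha : R) (M N : nat) : (1 <= M)%nat -> outer_avg b alpha M N <= K.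
Proof.
  intros HM. destruct N as [|N].
  - unfold outer_avg. simpl. rewrite Rinv_0, Rmult_0_l. apply bound_nonneg.
  - apply (Rmult_le_reg_l (INR (S N))); [apply lt_0_INR; lia|].
    rewrite INR_mul_outer_avg. replace (S N) with (S (S N) - 1)%nat at 2 by lia.
    apply sum_n_m_le_const. intros n _. apply Cmod_inner_avg_le, HM.
Qed.

Hypothesis limsup_outer_avg_vanishes : forall alpha, 0 <= alpha <= 1 ->
  is_lim_seq (fun M => real (LimSup_seq (fun N => outer_avg b alpha M N))) 0.

Lemma outer_avg_eventually_lt (t eps : R) : 0 <= t <= 1 -> 0 < eps ->
  exists M, (1 <= M)%nat /\ eventually (fun N => outer_avg b t M N < eps).
Proof.
  intros Ht Heps.
  destruct (proj2 (is_lim_seq_spec _ _) (limsup_outer_avg_vanishes t Ht) (mkposreal eps Heps))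
    as [M0 HM0].
  exists (S M0). split; [lia|].
  apply (LimSup_seq_eventually_lt _ K); [intros N; apply outer_avg_le; lia|].
  specialize (HM0 (S M0) (Nat.le_succ_diag_r M0)). simpl in HM0.
  rewrite Rminus_0_r in HM0. exact (proj1 (Rabs_def2 _ _ HM0)).
Qed.

Lemma exp_avg_locally_eventually_lt (t eps : R) : 0 <= t <= 1 -> 0 < eps ->
  exists delta : posreal, eventually (fun N =>
    forall alpha, Rabs (alpha - t) < delta -> Cmod (exp_avg b alpha N) < eps).
Proof.
  intros Ht Heps.
  destruct (outer_avg_eventually_lt t (eps / 3) Ht ltac:(lra)) as [M [HM [N1 HN1]]].
  set (L := 4 * PI * INR M * K).
  assert (HL : 0 <= L).
  { pose proof PI_RGT_0. pose proof (pos_INR M). pose proof bound_nonneg. unfold L.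
    apply Rmult_le_pos; [|lra]. apply Rmult_le_pos; lra. }
  assert (Hdelta : 0 < eps / 3 / (L + 1)) by (apply Rdiv_lt_0_compat; lra).
  exists (mkposreal _ Hdelta). simpl.
  destruct (eventually_div_INR_lt (2 * INR M * K) (eps / 3)) as [N2 HN2]; [lra|].
  exists (Nat.max (M * S N1) N2). intros N HN alpha Hat.
  assert (HMN : (M <= N)%nat) by nia.
  assert (HN1Q : (N1 <= N / M)%nat) by (apply Nat.div_le_lower_bound; nia).
  pose proof (Cmod_exp_avg_le alpha t M N HM HMN) as Hdecomp. fold L in Hdecomp.
  pose proof (HN1 _ HN1Q). pose proof (HN2 N ltac:(lia)).
  assert (Hshift : L * Rabs (alpha - t) < eps / 3).
  { apply Rlt_div_r in Hat; [|lra]. pose proof (Rabs_pos (alpha - t)). nra. }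
  lra.
Qed.

End BoundedSequence.

Theorem lemma2p2 (b : nat -> C) :
  (exists K : R, forall n : nat, Cmod (b n) <= K) ->
  (forall alpha : R, 0 <= alpha <= 1 ->
     is_lim_seq (fun M : nat => real (LimSup_seq (fun N : nat => outer_avg b alpha M N))) 0) ->
  is_lim_seq
    (fun N : nat => real (Lub_Rbar (fun y : R =>
        exists alpha : R, 0 <= alpha <= 1 /\ y = Cmod (exp_avg b alpha N))))
    0.
Proof.
  intros [K b_bounded] limsup_vanishes.
  apply is_lim_seq_spec. intros [eps Heps]. simpl.
  destruct (eventually_uniform_on_interval 0 1
              (fun alpha N => Cmod (exp_avg b alpha N) < eps / 2)) as [N0 HN0].
  { intros t Ht. apply (exp_avg_locally_eventually_lt b K b_bounded limsup_vanishes); lra. }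
  exists N0. intros N HN. rewrite Rminus_0_r.
  assert (Hlub : 0 <= real (Lub_Rbar (fun y => exists alpha, 0 <= alpha <= 1
                                          /\ y = Cmod (exp_avg b alpha N))) <= eps / 2).
  { apply (Lub_Rbar_between _ _ _ (Cmod (exp_avg b 0 N))); [exists 0; split; [lra | reflexivity]|].
    intros y [alpha [Halpha ->]]. split; [apply Cmod_ge_0 | apply Rlt_le, HN0; assumption]. }
  rewrite Rabs_pos_eq; lra.
Qed.
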